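(* Let $\mathbb{M}^2$ be a normed plane and let $S$ be a finite set of points of $\mathbb{M}^2$ with all pairwise distances distinct. If $e$ is an edge of $\mathtt{MXST}(S)$, then at least one endpoint of $e$ lies on $\partial\mathrm{conv}(S)$.
   Context: $\mathbb{M}^2$ is $\mathbb{R}^2$ with an arbitrary norm $\|\cdot\|$. $\mathtt{MXST}(S)$ is the (unique) maximum spanning tree of the complete graph on $S$ in which the edge $\{p,q\}$ has weight $\|p-q\|$. $\partial\mathrm{conv}(S)$ is the boundary of the convex hull of $S$. *)

From HB Require Import structures.
From mathcomp Require Import all_boot all_order all_algebra.
From mathcomp Require Import reals.
Set Implicit Arguments. Unset Strict Implicit. Unset Printing Implicit Defensive.
Import Order.TTheory GRing.Theory Num.Theory.
Local Open Scope ring_scope.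

Section Defs.
Variable R : realType.
Notation pt := 'rV[R]_2.

Definition is_norm (N : pt -> R) : Prop :=
  [/\ (forall v, N v = 0 -> v = 0),
      (forall (a : R) v, N (a *: v) = `|a| * N v) &
      (forall u v, N (u + v) <= N u + N v)].

Variable n : nat.
Variable p : 'I_n -> pt.   (* S = { p i | i < n } *)
Variable N : pt -> R.

Definition distinct_distances : Prop :=
  forall i j k l : 'I_n, i != j -> k != l ->
    ~ ((i == k) && (j == l) || (i == l) && (j == k)) ->
    N (p i - p j) != N (p k - p l).

Definition in_conv (x : pt) : Prop :=
  exists l : 'I_n -> R, [/\ (forall i, 0 <= l i), \sum_i l i = 1 &
                           x = \sum_i l i *: p i].

Definition in_interior (A : pt -> Prop) (x : pt) : Prop :=
  exists2 eps : R, 0 < eps & forall y, N (y - x) < eps -> A y.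
Definition in_closure (A : pt -> Prop) (x : pt) : Prop :=
  forall eps : R, 0 < eps -> exists2 y, A y & N (y - x) < eps.
Definition on_boundary (A : pt -> Prop) (x : pt) : Prop :=
  in_closure A x /\ ~ in_interior A x.

(* Subgraphs of the complete graph on S: edge sets of ordered pairs (i, j)
   with i < j, representing the unordered edge {p i, p j}. *)
Definition adj (T : {set 'I_n * 'I_n}) : rel 'I_n :=
  fun i j => ((i, j) \in T) || ((j, i) \in T).

Definition acyclic (T : {set 'I_n * 'I_n}) : Prop :=
  ~ exists c : seq 'I_n, [&& uniq c, (2 < size c)%N & cycle (adj T) c].

Definition spanning_tree (T : {set 'I_n * 'I_n}) : Prop :=
  [/\ (forall e, e \in T -> (e.1 < e.2)%N),
      (forall x y, connect (adj T) x y) & acyclic T].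

Definition weight (T : {set 'I_n * 'I_n}) : R :=
  \sum_(e in T) N (p e.1 - p e.2).

Definition max_spanning_tree (T : {set 'I_n * 'I_n}) : Prop :=
  spanning_tree T /\ forall T', spanning_tree T' -> weight T' <= weight T.

End Defs.

(* Suppose both endpoints a, b of an edge of the maximum spanning tree are
   interior points of conv(S).  Take a linear functional phi with
   |phi| <= N and phi(b - a) = N(b - a).  A small step from b in the
   direction b - a stays in the hull, so some point i of S has
   phi(i) > phi(b); symmetrically some j has phi(j) < phi(a).  As phi is
   1-Lipschitz, the segments ai, jb and ji are all longer than ab.  Deleting
   ab splits the tree into two sides, one of these segments joins them, and
   exchanging it for ab gives a heavier spanning tree. *)

From HB Require Import structures.
From mathcomp Require Import all_boot all_order all_algebra.
From mathcomp Require Import reals.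
From mathcomp Require Import ring lra.
Set Implicit Arguments.
Unset Strict Implicit.
Unset Printing Implicit Defensive.
Import Order.TTheory GRing.Theory Num.Theory.
Local Open Scope ring_scope.

Section PlaneAlgebra.
Variable R : realFieldType.
Implicit Types (u v w : 'rV[R]_2) (c : 'cV[R]_2).

Definition pairing c v : R := (v *m c) 0 0.

Lemma pairingE c v : pairing c v = v 0 0 * c 0 0 + v 0 1 * c 1 0.
Proof.
rewrite /pairing mxE !big_ord_recl big_ord0 addr0.
by have -> : lift ord0 ord0 = 1 :> 'I_2 by apply: val_inj.
Qed.

Lemma pairingD c v w : pairing c (v + w) = pairing c v + pairing c w.
Proof. by rewrite /pairing mulmxDl mxE. Qed.

Lemma pairingZ c (a : R) v : pairing c (a *: v) = a * pairing c v.
Proof. by rewrite /pairing -scalemxAl mxE. Qed.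

Lemma pairingB c v w : pairing c (v - w) = pairing c v - pairing c w.
Proof. by rewrite /pairing mulmxBl !mxE. Qed.

Lemma pairingNr c v : pairing c (- v) = - pairing c v.
Proof. by rewrite /pairing mulNmx !mxE. Qed.

Lemma pairingNl c v : pairing (- c) v = - pairing c v.
Proof. by rewrite /pairing mulmxN !mxE. Qed.

Lemma pairing_sum (I : finType) c (l : I -> R) (q : I -> 'rV[R]_2) :
  pairing c (\sum_i l i *: q i) = \sum_i l i * pairing c (q i).
Proof.
rewrite /pairing mulmx_suml summxE; apply: eq_bigr => i _.
by rewrite -scalemxAl mxE.
Qed.

Definition perp u : 'rV[R]_2 := \row_j (if j == 0 then - u 0 1 else u 0 0).

Lemma ord2P (j : 'I_2) : j = 0 \/ j = 1.
Proof. by case: j => [[|[|//]] lt_j]; [left|right]; apply: val_inj. Qed.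

Lemma coord_sqr_sum_neq0 u : u != 0 -> u 0 0 ^+ 2 + u 0 1 ^+ 2 != 0.
Proof.
apply: contra; rewrite paddr_eq0 ?sqr_ge0 // !sqrf_eq0 => /andP[u0 u1].
by apply/eqP/rowP => j; rewrite mxE; case: (ord2P j) => ->; exact/eqP.
Qed.

Lemma perp_span u : u != 0 -> forall v, exists a b : R, v = a *: perp u + b *: u.
Proof.
move=> /coord_sqr_sum_neq0 q_neq0 v.
exists ((v 0 1 * u 0 0 - v 0 0 * u 0 1) / (u 0 0 ^+ 2 + u 0 1 ^+ 2)).
exists ((v 0 0 * u 0 0 + v 0 1 * u 0 1) / (u 0 0 ^+ 2 + u 0 1 ^+ 2)).
by apply/rowP => j; rewrite !mxE; case: (ord2P j) => -> /=; field.
Qed.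

Lemma perp_dual u (t r : R) : u != 0 ->
  exists c : 'cV[R]_2, pairing c (perp u) = t /\ pairing c u = r.
Proof.
move=> /coord_sqr_sum_neq0 q_neq0.
exists (\col_i ((if i == 0 then r * u 0 0 - t * u 0 1 else r * u 0 1 + t * u 0 0)
                 / (u 0 0 ^+ 2 + u 0 1 ^+ 2))).
by rewrite !pairingE !mxE /=; split; field.
Qed.

End PlaneAlgebra.

Section NormedPlane.
Variables (R : realType) (N : 'rV[R]_2 -> R).
Hypothesis N_norm : is_norm N.
Implicit Types (u v w : 'rV[R]_2).

Lemma normZ (a : R) v : N (a *: v) = `|a| * N v.
Proof. by case: N_norm. Qed.

Lemma norm_triangle u v : N (u + v) <= N u + N v.
Proof. by case: N_norm. Qed.

Lemma normN v : N (- v) = N v.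
Proof. by rewrite -scaleN1r normZ normrN1 mul1r. Qed.

Lemma distC u v : N (u - v) = N (v - u).
Proof. by rewrite -normN opprB. Qed.

Lemma norm0 : N 0 = 0.
Proof. by rewrite -(scale0r 0) normZ normr0 mul0r. Qed.

Lemma norm_ge0 v : 0 <= N v.
Proof. by have := norm_triangle v (- v); rewrite subrr norm0 normN; lra. Qed.

Lemma norm_gt0 v : v != 0 -> 0 < N v.
Proof.
move=> v_neq0; rewrite lt0r norm_ge0 andbT.
apply: contra v_neq0 => /eqP Nv0.
by case: N_norm => N_eq0 _ _; rewrite (N_eq0 _ Nv0).
Qed.

(* The Hahn-Banach extension step from the line through u to the plane. *)
Lemma norm_sandwich w u : exists t : R, forall s : R, `|t + s * N u| <= N (w + s *: u).
Proof.
pose f s := - N (w + s *: u) - s * N u.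
have f_le s s' : f s <= N (w + s' *: u) - s' * N u.
  have : (s' - s) * N u <= N ((w + s' *: u) - (w + s *: u)).
    have -> : w + s' *: u - (w + s *: u) = (s' - s) *: u.
      by rewrite scalerBl opprD addrACA subrr add0r.
    by rewrite normZ ler_wpM2r ?norm_ge0 ?ler_norm.
  have := norm_triangle (w + s' *: u) (- (w + s *: u)).
  rewrite normN /f; lra.
pose E : R -> Prop := fun r => exists s, f s = r.
exists (sup E) => s; rewrite ler_norml; apply/andP; split.
  have : f s <= sup E.
    apply: ub_le_sup; last by exists s.
    by exists (N w) => _ [s' <-]; have := f_le s' 0; rewrite scale0r addr0 mul0r subr0.
  rewrite /f; lra.
have : sup E <= N (w + s *: u) - s * N u.
  by apply: ge_sup; [exists (f 0), 0 | move=> _ [s' <-]; apply: f_le].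
lra.
Qed.

Lemma norming_functional u : u != 0 ->
  exists c : 'cV[R]_2, pairing c u = N u /\ forall v, `|pairing c v| <= N v.
Proof.
move=> u_neq0; have [t sandwich] := norm_sandwich (perp u) u.
have [c [c_perp c_u]] := perp_dual t (N u) u_neq0.
exists c; split => // v; have [a [b ->]] := perp_span u_neq0 v.
rewrite pairingD !pairingZ c_perp c_u.
have [->|a_neq0] := eqVneq a 0.
  by rewrite scale0r add0r mul0r add0r normZ normrM (ger0_norm (norm_ge0 _)).
have -> : a *: perp u + b *: u = a *: (perp u + (b / a) *: u).
  by rewrite scalerDr scalerA mulrC divfK.
have -> : a * t + b * N u = a * (t + b / a * N u) by field.
by rewrite normZ normrM ler_wpM2l.
Qed.

End NormedPlane.

Section ConvexHull.
Variables (R : realType) (n : nat) (p : 'I_n -> 'rV[R]_2) (N : 'rV[R]_2 -> R).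
Hypothesis N_norm : is_norm N.

Lemma in_conv_vertex i : in_conv p (p i).
Proof.
exists (fun j => (j == i)%:R); split.
- by move=> j; rewrite ler0n.
- by rewrite (bigD1 i) //= eqxx big1 ?addr0 // => j /negbTE ->.
- by rewrite (bigD1 i) //= eqxx scale1r big1 ?addr0 // => j /negbTE ->; rewrite scale0r.
Qed.

Lemma vertex_on_boundary i :
  ~ in_interior N (in_conv p) (p i) -> on_boundary N (in_conv p) (p i).
Proof.
split=> // eps eps_gt0.
by exists (p i); [exact: in_conv_vertex | rewrite subrr norm0].
Qed.

Lemma in_conv_pairing_le_vertex c x :
  in_conv p x -> exists i, pairing c x <= pairing c (p i).
Proof.
case=> l [l_ge0 l_sum1 ->].
have /hasP[i0 _ _] : has (fun i => true && (0 < l i)) (index_enum 'I_n).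
  by rewrite -psumr_neq0 // l_sum1 oner_neq0.
have [i _ i_max] := @arg_maxP _ _ _ i0 predT (fun i => pairing c (p i)) isT.
exists i; rewrite pairing_sum -[leRHS]mul1r -l_sum1 mulr_suml.
by apply: ler_sum => j _; rewrite ler_wpM2l //; apply: i_max.
Qed.

Lemma interior_pairing_lt_vertex c u x :
  in_interior N (in_conv p) x -> 0 < pairing c u ->
  exists i, pairing c x < pairing c (p i).
Proof.
case=> eps eps_gt0 ball cu_gt0.
pose s := eps / (N u + 1).
have Nu_ge0 := norm_ge0 N_norm u.
have s_gt0 : 0 < s by rewrite divr_gt0 // ltr_wpDl.
have /ball : N (x + s *: u - x) < eps.
  rewrite addrAC subrr add0r normZ // gtr0_norm // /s.
  by rewrite mulrAC ltr_pdivrMr ?ltr_wpDl // ltr_pM2l // ltrDl.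
case/(in_conv_pairing_le_vertex c) => i le_i; exists i.
by apply: lt_le_trans le_i; rewrite pairingD pairingZ ltrDl mulr_gt0.
Qed.

Lemma interior_pairing_gt_vertex c u x :
  in_interior N (in_conv p) x -> 0 < pairing c u ->
  exists i, pairing c (p i) < pairing c x.
Proof.
move=> x_int cu_gt0.
have cu_gt0' : 0 < pairing (- c) (- u) by rewrite pairingNl pairingNr opprK.
have [i] := interior_pairing_lt_vertex x_int cu_gt0'.
by rewrite !pairingNl ltrN2; exists i.
Qed.

End ConvexHull.

Section SimpleCycles.
Variables (T : finType) (s e : rel T).

Lemma uniq_cycle_detour c x y :
  uniq c -> (2 < size c)%N -> cycle s c -> x \in c -> next c x = y ->
  (forall u v, s u v -> e u v || (u \in [:: x; y]) && (v \in [:: x; y])) ->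
  connect e y x.
Proof.
move=> c_uniq c_size c_cycle /rot_to[i q rot_c] <- {y} se.
have : uniq (x :: q) by rewrite -rot_c rot_uniq.
have : (2 < size (x :: q))%N by rewrite -rot_c size_rot.
have : cycle s (x :: q) by rewrite -rot_c rot_cycle.
move: se; rewrite -(next_rot i c_uniq) rot_c {c c_uniq c_size c_cycle rot_c}.
case: q => [|y [|h q]] //=; rewrite eqxx => se /and3P[_ s_yh q_path] _.
rewrite !inE !negb_or => /andP[/and3P[x_y x_h x_q] /andP[/andP[y_h y_q] h_q]].
pose P := [predC [:: x; y]].
have e_P u v : P u -> s u v -> e u v.
  by move=> P_u /se; rewrite (negbTE P_u) orbF.
have P_hq : all P (h :: q).
  apply/allP => t /predU1P[-> | t_q]; first by rewrite !inE !negb_or eq_sym x_h eq_sym y_h.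
  by rewrite !inE !negb_or; apply/andP; split; [apply: contraNneq x_q | apply: contraNneq y_q] => <-.
apply/connectP; exists (h :: rcons q x); last by rewrite /= last_rcons.
move: q_path; rewrite /= !rcons_path => /andP[q_path s_last].
rewrite (sub_in_path (fun u v P_u _ => e_P u v P_u) P_hq q_path).
rewrite (e_P _ _ _ s_last) ?(allP P_hq _ (mem_last _ _)) //.
move: (se _ _ s_yh); rewrite !inE (eq_sym h x) (eq_sym h y).
by rewrite (negbTE x_h) (negbTE y_h) andbF orbF => ->.
Qed.

Lemma uniq_cycle_bridge c x y :
  symmetric e -> ~~ connect e x y ->
  (forall u v, s u v -> [|| e u v, (u == x) && (v == y) | (u == y) && (v == x)]) ->
  uniq c -> (2 < size c)%N -> cycle s c -> cycle e c.
Proof.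
move=> e_sym xy_disconn se c_uniq c_size c_cycle.
have se' u v : s u v -> e u v || (u \in [:: x; y]) && (v \in [:: x; y]).
  by move/se; rewrite !inE; case: (e u v) (u == x) (v == y) (u == y) (v == x) => [] [] [] [] [].
apply: (cycle_from_next c_uniq) => z z_c.
case/or3P: (se _ _ (next_cycle c_cycle z_c)) => [// | | ] /andP[/eqP z_eq /eqP z'_eq];
  exfalso; move/negP: xy_disconn; apply.
  rewrite (sym_connect_sym e_sym) -z_eq.
  apply: uniq_cycle_detour c_uniq c_size c_cycle z_c z'_eq _.
  by move=> u v /se'; rewrite z_eq.
rewrite -z_eq; apply: uniq_cycle_detour c_uniq c_size c_cycle z_c z'_eq _.
by move=> u v /se'; rewrite z_eq !inE (orbC (u == x)) (orbC (v == x)).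
Qed.

End SimpleCycles.

Lemma adj_sym n (S : {set 'I_n * 'I_n}) : symmetric (adj S).
Proof. by move=> i j; rewrite /adj orbC. Qed.

Lemma adj_subset n (S S' : {set 'I_n * 'I_n}) : S \subset S' -> subrel (adj S) (adj S').
Proof. by move=> /subsetP sub u v /orP[] /sub uv; rewrite /adj uv ?orbT. Qed.

Definition sorted_pair n (i j : 'I_n) := if (i < j)%N then (i, j) else (j, i).

Lemma sorted_pair_lt n (i j : 'I_n) :
  i != j -> ((sorted_pair i j).1 < (sorted_pair i j).2)%N.
Proof.
move=> i_neq_j; rewrite /sorted_pair; case: (ltnP i j) => //=.
by rewrite leq_eqVlt => /predU1P[/val_inj j_eq_i | //]; rewrite j_eq_i eqxx in i_neq_j.
Qed.

Lemma adj_sorted_pair n (S : {set 'I_n * 'I_n}) i j u v :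
  adj (sorted_pair i j |: S) u v =
  [|| adj S u v, (u == i) && (v == j) | (u == j) && (v == i)].
Proof.
rewrite /adj /sorted_pair; case: ifP => _; rewrite !in_setU1 !xpair_eqE;
  by case: (u == i) (v == j) (u == j) (v == i) ((u, v) \in S) ((v, u) \in S)
    => [] [] [] [] [] [].
Qed.

Section SpanningTreeExchange.
Variables (n : nat) (T : {set 'I_n * 'I_n}) (a b : 'I_n).
Hypotheses (T_tree : spanning_tree T) (Tab : (a, b) \in T).
Local Notation T0 := (T :\ (a, b)).

Let a_lt_b : (a < b)%N.
Proof. by case: T_tree => /(_ _ Tab). Qed.

Let adjT_cases u v :
  adj T u v = [|| adj T0 u v, (u == a) && (v == b) | (u == b) && (v == a)].
Proof.
have T_eq : T = sorted_pair a b |: T0 by rewrite /sorted_pair a_lt_b setD1K.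
by rewrite {1}T_eq adj_sorted_pair.
Qed.

Let adjT0_sub_adjT : subrel (adj T0) (adj T).
Proof. exact/adj_subset/subsetDl. Qed.

Lemma connect_to_removed_edge z : connect (adj T0) a z || connect (adj T0) b z.
Proof.
case: T_tree => _ T_conn _.
have cl : closed (adj T) [pred t | connect (adj T0) a t || connect (adj T0) b t].
  apply: intro_closed => [|u v]; first exact/sym_connect_sym/adj_sym.
  rewrite adjT_cases !inE.
  case/or3P=> [uv | /andP[/eqP-> /eqP->] | /andP[/eqP-> /eqP->]]; rewrite ?connect0 ?orbT //.
  by case/orP=> conn; apply/orP; [left | right]; apply: connect_trans conn (connect1 uv).
by have := closed_connect cl (T_conn a z); rewrite !inE connect0 => <-.
Qed.

Lemma removed_edge_disconnects : ~~ connect (adj T0) a b.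
Proof.
apply/negP => /connectP[q0 /shortenP[q q_path q_uniq _] q_last].
case: T_tree => T_ord _; apply; exists (a :: q).
rewrite q_uniq /= rcons_path (sub_path adjT0_sub_adjT q_path) -q_last /adj Tab orbT andbT.
case: q q_path q_uniq q_last => [|z [|z' q]] //= q_path _ q_last.
  by move: a_lt_b; rewrite q_last ltnn.
move: q_path; rewrite -q_last /adj !in_setD1 eqxx andbT /= => /andP[_ /T_ord /=].
by rewrite ltnNge ltnW.
Qed.

Variables x y : 'I_n.
Hypotheses (ax : connect (adj T0) a x) (ay : ~~ connect (adj T0) a y).
Local Notation T' := (sorted_pair x y |: T0).

Let xy_disconnected : ~~ connect (adj T0) x y.
Proof. by apply: contra ay; apply: connect_trans ax. Qed.

Let sorted_pair_notin : sorted_pair x y \notin T0.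
Proof.
apply: contra xy_disconnected => xy_in; apply: connect1.
by move: xy_in; rewrite /adj /sorted_pair; case: ifP => _ ->; rewrite ?orbT.
Qed.

Lemma exchange_spanning_tree : spanning_tree T'.
Proof.
case: T_tree => T_ord T_conn T_acyclic.
have adjT0_sub_adjT' : subrel (adj T0) (adj T') by apply/adj_subset/subsetUr.
have connT0_sub_connT' : subrel (connect (adj T0)) (connect (adj T')).
  by apply: connect_sub => u v /adjT0_sub_adjT' /connect1.
split.
- move=> f; rewrite in_setU1 => /predU1P[-> | /setD1P[_ /T_ord] //].
  by apply: sorted_pair_lt; apply: contraNneq ay => <-.
- have conn_ab : connect (adj T') a b.
    apply: connect_trans (connT0_sub_connT' _ _ ax) _.
    have xy_T' : adj T' x y by rewrite adj_sorted_pair !eqxx /= orbT.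
    apply: connect_trans (connect1 xy_T') _.
    apply: connT0_sub_connT'; rewrite (sym_connect_sym (adj_sym _)).
    by have := connect_to_removed_edge y; rewrite (negbTE ay).
  move=> u v; apply: connect_sub (T_conn u v) => {u v} u v.
  rewrite adjT_cases => /or3P[/connect1/connT0_sub_connT' // | | ];
    move=> /andP[/eqP-> /eqP->] //.
  by rewrite (sym_connect_sym (adj_sym _)).
- case=> c /and3P[c_uniq c_size c_cycle]; apply: T_acyclic; exists c.
  rewrite c_uniq c_size (sub_cycle adjT0_sub_adjT) //.
  apply: (uniq_cycle_bridge (adj_sym _) xy_disconnected) c_uniq c_size c_cycle.
  by move=> u v; rewrite adj_sorted_pair.
Qed.

Variables (R : realType) (p : 'I_n -> 'rV[R]_2) (N : 'rV[R]_2 -> R).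
Hypothesis N_sym : forall v, N (- v) = N v.

Lemma weight_exchange :
  weight p N T' = weight p N T - N (p a - p b) + N (p x - p y).
Proof.
rewrite /weight (big_setU1 _ sorted_pair_notin) (big_setD1 _ Tab) /= /sorted_pair.
by case: ifP => _ /=; last rewrite -opprB N_sym; lra.
Qed.

End SpanningTreeExchange.

Lemma max_spanning_tree_cut (R : realType) n (p : 'I_n -> 'rV[R]_2) (N : 'rV[R]_2 -> R)
    (T : {set 'I_n * 'I_n}) a b :
  (forall v, N (- v) = N v) -> max_spanning_tree p N T -> (a, b) \in T ->
  exists A : {set 'I_n}, [/\ a \in A, b \notin A &
    forall x y, x \in A -> y \notin A -> N (p x - p y) <= N (p a - p b)].
Proof.
move=> N_sym [T_tree T_max] Tab.
exists [set z | connect (adj (T :\ (a, b))) a z]; rewrite !inE connect0.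
split=> // [|x y]; first exact: removed_edge_disconnects.
rewrite !inE => ax ay; have := T_max _ (exchange_spanning_tree T_tree Tab ax ay).
by rewrite (weight_exchange Tab ax ay p N_sym); lra.
Qed.

Theorem lemma3p5 (R : realType) (N : 'rV[R]_2 -> R) (n : nat)
  (p : 'I_n -> 'rV[R]_2) :
  is_norm N -> injective p -> distinct_distances p N ->
  forall T : {set 'I_n * 'I_n}, max_spanning_tree p N T ->
  forall e, e \in T ->
    on_boundary N (in_conv p) (p e.1) \/ on_boundary N (in_conv p) (p e.2).
Proof.
move=> N_norm p_inj _ T T_max [a b] Tab /=.
have [a_int|] := boolp.pselect (in_interior N (in_conv p) (p a)); last first.
  by left; apply: vertex_on_boundary.
have [b_int|] := boolp.pselect (in_interior N (in_conv p) (p b)); last first.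
  by right; apply: vertex_on_boundary.
exfalso; pose u := p b - p a.
have u_neq0 : u != 0.
  have [[T_ord _ _] _] := T_max.
  by rewrite subr_eq0; apply: contraTneq (T_ord _ Tab) => /p_inj ->; rewrite ltnn.
have [c [c_u c_le]] := norming_functional N_norm u_neq0.
have cu_gt0 : 0 < pairing c u by rewrite c_u norm_gt0.
have [i b_lt_i] := interior_pairing_lt_vertex N_norm b_int cu_gt0.
have [j j_lt_a] := interior_pairing_gt_vertex N_norm a_int cu_gt0.
have [A [aA bA cut]] := max_spanning_tree_cut (normN N_norm) T_max Tab.
have short_across x y : x \in A -> y \notin A ->
    `|pairing c (p x) - pairing c (p y)| <= N u.
  move=> xA yA; rewrite -pairingB (le_trans (c_le _)) //.
  by rewrite (le_trans (cut _ _ xA yA)) // (distC N_norm).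
have phi_u : pairing c (p b) - pairing c (p a) = N u by rewrite -pairingB.
case: (boolP (i \in A)) => iA; last first.
  by move: (short_across _ _ aA iA); rewrite ler_norml => /andP[]; lra.
case: (boolP (j \in A)) => jA.
  by move: (short_across _ _ jA bA); rewrite ler_norml => /andP[]; lra.
by move: (short_across _ _ iA jA); rewrite ler_norml => /andP[]; lra.
Qed.
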